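(* Let $r>1$, $q\in(0,1)$ and $p=1-q$. Then: (i) for all integers $k\ge1$, $\displaystyle\sum_{j=1}^{\infty}\frac{(r+k)\cdots(r+j+k-1)}{k(k+1)\cdots(j+k-1)}q^j\le p^{-(r+1)}-1$; (ii) for all integers $k\ge1$, $\displaystyle\sum_{j=1}^{\infty}\frac{(r+k)\cdots(r+j+k-1)}{(k+1)\cdots(j+k)}q^j\le\frac{p^{-r}-1}{rq}-1$; (iii) for all integers $k\ge1$, $\displaystyle\sum_{j=2}^{\infty}\frac{(r+k+1)\cdots(r+j+k-1)}{(k+1)\cdots(j+k-1)}q^j\le\frac{p^{-(r+1)}-1}{r}-q$; (iv) for all integers $k\ge2$, $\displaystyle\sum_{j=1}^{\infty}\frac{(r+k+1)\cdots(r+j+k)}{k(k+1)\cdots(j+k-1)}q^j\le\frac{p^{-(r+2)}-1}{(r+1)q}-1$; (v) for all integers $k\ge2$, $\displaystyle\sum_{j=1}^{\infty}\frac{(r+k)\cdots(r+j+k-1)}{k(k+1)\cdots(j+k)}q^j\le\frac{p^{-r}-1}{r(r+1)q^2}-\frac12$.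
   Context: In each product $(a)\cdots(b)$ the factors increase by $1$ from $a$ to $b$; e.g. $(r+k)\cdots(r+j+k-1)$ has $j$ factors and $k(k+1)\cdots(j+k-1)$ has $j$ factors. *)

From mathcomp Require Import all_boot all_order all_algebra.
From mathcomp Require Import all_classical all_reals all_analysis.
Set Implicit Arguments. Unset Strict Implicit. Unset Printing Implicit Defensive.
Import Order.TTheory GRing.Theory Num.Theory.
Local Open Scope ring_scope.

Definition rprod {R : ringType} (x : R) (m : nat) : R :=
  \prod_(i < m) (x + i%:R).

From mathcomp Require Import all_boot all_order all_algebra.
From mathcomp Require Import all_classical all_reals all_analysis.
From mathcomp Require Import ring lra.
Import Order.TTheory GRing.Theory Num.Theory.
Local Open Scope ring_scope.

(* The proof rests on two facts.
   (1) Binomial bound: the partial sums of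
         hsum s a x N = \sum_(m < N) (s)_m / (a)_m * x^m
       satisfy hsum s 1 x N <= (1 - x)^(-s) for s > 0 and 0 <= x < 1.  This is
       proved by induction on N: the derivative of x |-> hsum s 1 x N.+1 is
       s * hsum (s + 1) 1 x N, so the mean value theorem transfers the bound
       from s + 1 to s.
   (2) Comparison: for t >= 0 the ratio (t + b)_j / (b)_j decreases in b > 0,
       so each series is dominated termwise by a tail of hsum (t + a) a q with
       a in {1, 2, 3}; the shift identity
         hsum s a x N.+1 = 1 + s / a * x * hsum (s + 1) (a + 1) x N
       turns the bound (1) into bounds for a = 2 and a = 3.
   Each item (i)-(v) is proved as a separate lemma at its natural range of r;
   the theorem collects them. *)

Section RisingProducts.
Context {R : realType}.

Lemma rprod0 (s : R) : rprod s 0 = 1.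
Proof. by rewrite /rprod big_ord0. Qed.

Lemma rprodS (s : R) m : rprod s m.+1 = s * rprod (s + 1) m.
Proof.
rewrite /rprod big_ord_recl /= addr0; congr (_ * _).
by apply: eq_bigr => i _; rewrite /bump /= add1n -natr1; ring.
Qed.

Lemma rprodSr (s : R) m : rprod s m.+1 = rprod s m * (s + m%:R).
Proof. by rewrite /rprod big_ord_recr. Qed.

Lemma rprod_gt0 (a : R) m : 0 < a -> 0 < rprod a m.
Proof.
move=> a_gt0; apply: prodr_gt0 => i _.
by apply: (lt_le_trans a_gt0); rewrite lerDl.
Qed.

(* For t >= 0 the ratio (t + b)_j / (b)_j is nonincreasing in b > 0, since
   each factor (t + b + i) / (b + i) is. *)
Lemma rprod_ratio_le (t a b : R) j : 0 <= t -> 0 < a -> a <= b ->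
  rprod (t + b) j / rprod b j <= rprod (t + a) j / rprod a j.
Proof.
move=> t_ge0 a_gt0 le_ab; rewrite /rprod -!prodf_div; apply: ler_prod => i _.
have ai_gt0 : 0 < a + i%:R by rewrite ltr_wpDr.
have bi_gt0 : 0 < b + i%:R by rewrite (lt_le_trans ai_gt0) // lerD2r.
apply/andP; split.
  by rewrite divr_ge0 // ltW // -addrA ltr_wpDl.
rewrite ler_pdivrMr // mulrAC ler_pdivlMr // -!addrA.
have : t * (a + i%:R) <= t * (b + i%:R) by rewrite ler_wpM2l // lerD2r.
nra.
Qed.

Lemma ratio_term_ge0 (s a x : R) i j l : 0 < s -> 0 < a -> 0 <= x ->
  0 <= rprod s i / rprod a j * x ^+ l.
Proof.
move=> s_gt0 a_gt0 x_ge0.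
by rewrite mulr_ge0 ?exprn_ge0 // divr_ge0 // ltW // rprod_gt0.
Qed.

End RisingProducts.

Section HypergeometricPartialSums.
Context {R : realType}.

Definition hsum (s a x : R) (N : nat) : R :=
  \sum_(m < N) rprod s m / rprod a m * x ^+ m.

Lemma hsum_split (s a x : R) N :
  hsum s a x N.+1 = 1 + \sum_(j < N) rprod s j.+1 / rprod a j.+1 * x ^+ j.+1.
Proof. by rewrite /hsum big_ord_recl !rprod0 divr1 mul1r expr0. Qed.

Lemma hsum_shift (s a x : R) N : 0 < a ->
  hsum s a x N.+1 = 1 + s / a * x * hsum (s + 1) (a + 1) x N.
Proof.
move=> a_gt0; rewrite hsum_split; congr (_ + _).
rewrite mulr_sumr; apply: eq_bigr => i _.
by rewrite !rprodS exprS invfM; ring.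
Qed.

Lemma hsum_ge0 (s a x : R) N : 0 < s -> 0 < a -> 0 <= x -> 0 <= hsum s a x N.
Proof. by move=> *; apply: sumr_ge0 => i _; apply: ratio_term_ge0. Qed.

Lemma hsum_at0 (s a : R) N : hsum s a 0 N.+1 = 1.
Proof. by rewrite hsum_split big1 ?addr0 // => i _; rewrite expr0n mulr0. Qed.

Lemma is_derive_monomial (c t : R) n :
  is_derive t 1 (fun x : R => c * x ^+ n.+1) (c * (n.+1%:R * t ^+ n)).
Proof.
have := is_deriveZ c (is_deriveX n.+1 (is_derive_id t (1 : R))).
have -> : c \*: ((fun x : R => x) ^+ n.+1) = (fun x : R => c * x ^+ n.+1).
  by apply/funext => x; rewrite /= exprfctE.
by rewrite /GRing.scale /= mulr1.
Qed.

(* Termwise differentiation: d/dx hsum s 1 x (N+1) = s * hsum (s+1) 1 x N,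
   because m (s)_m / m! = s (s+1)_(m-1) / (m-1)!. *)
Lemma is_derive_hsum (s t : R) N :
  is_derive t 1 (fun x => hsum s 1 x N.+1) (s * hsum (s + 1) 1 t N).
Proof.
elim: N => [|N IH].
  have -> : (fun x => hsum s 1 x 1) = cst 1.
    by apply/funext => x; rewrite hsum_split big_ord0 addr0.
  by rewrite /hsum big_ord0 mulr0; exact: is_derive_cst.
have -> : (fun x => hsum s 1 x N.+2) = (fun x => hsum s 1 x N.+1) +
    (fun x => rprod s N.+1 / rprod 1 N.+1 * x ^+ N.+1).
  by apply/funext => x; rewrite /hsum big_ord_recr.
apply: is_derive_eq; first exact: is_deriveD IH (is_derive_monomial _ _ _).
rewrite /hsum big_ord_recr /= mulrDr; congr (_ + _).
have : 0 < rprod 1 N :> R by apply: rprod_gt0.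
rewrite rprodS rprodSr -natr1 addrC invfM => ?.
by field; rewrite !gt_eqF // ltr_wpDr.
Qed.

Lemma is_derive_one_minus (y : R) : is_derive y 1 (fun y : R => 1 - y) (-1).
Proof.
have -> : (fun y : R => 1 - y) = cst 1 - id by apply/funext.
have := is_deriveB (is_derive_cst (1 : R) y (1 : R)) (is_derive_id y (1 : R)).
by rewrite sub0r.
Qed.

(* The difference g = (1 - x)^(-s) - hsum s 1 x (N+1) vanishes at 0
   and, by induction applied to s + 1, has nonnegative derivative on [0, 1). *)
Lemma hsum_le_powR N : forall (s x : R), 0 < s -> 0 <= x -> x < 1 ->
  hsum s 1 x N <= (1 - x) `^ (-s).
Proof.
elim: N => [|N IH] s x s_gt0 x_ge0 x_lt1; first by rewrite /hsum big_ord0 powR_ge0.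
pose g := ((@powR R)^~ (-s) \o (fun y : R => 1 - y)) - (fun y => hsum s 1 y N.+1).
pose dg y := s * (1 - y) `^ (-s - 1) - s * hsum (s + 1) 1 y N.
have Dg (y : R) : y < 1 -> is_derive y 1 g (dg y).
  move=> y_lt1; apply: is_deriveB; last exact: is_derive_hsum.
  have y_gt0 : 0 < 1 - y by rewrite subr_gt0.
  have := @is_derive1_comp R ((@powR R)^~ (-s)) (fun y : R => 1 - y) y _ _
    (is_derive1_powR (-s) y_gt0) (is_derive_one_minus y).
  by move=> D; apply: is_derive_eq; rewrite mulrN1 mulNr opprK.
have [c] : exists2 c, c \in `[0, x] & g x - g 0 = dg c * (x - 0).
  apply: MVT_segment => // [y|].
    by rewrite in_itv /= => /andP[_ yx]; apply: Dg; exact: lt_trans yx x_lt1.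
  apply: derivable_within_continuous => y; rewrite in_itv /= => /andP[_ yx].
  by apply: ex_derive; apply: Dg; exact: le_lt_trans yx x_lt1.
rewrite in_itv /= => /andP[c_ge0 cx].
have -> : g 0 = 0 by rewrite /g !fctE /= subr0 hsum_at0 powR1 subrr.
rewrite !subr0 => g_eq.
have : 0 <= g x.
  rewrite g_eq mulr_ge0 // /dg -mulrBr mulr_ge0 ?(ltW s_gt0) //.
  rewrite subr_ge0 -opprD IH // ?ltr_wpDr //; exact: le_lt_trans cx x_lt1.
by rewrite /g /= subr_ge0.
Qed.

Lemma hsum2_le_powR (s x : R) N : 0 < s -> 0 <= x -> x < 1 ->
  1 + s * x * hsum (s + 1) (1 + 1) x N <= (1 - x) `^ (-s).
Proof.
by move=> *; rewrite -[s in s * x]divr1 -hsum_shift ?ltr01 // hsum_le_powR.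
Qed.

Lemma hsum_tail_le (t a b x : R) n : 0 <= t -> 0 < a -> a <= b -> 0 <= x ->
  \sum_(j < n) rprod (t + b) j.+1 / rprod b j.+1 * x ^+ j.+1
  <= hsum (t + a) a x n.+1 - 1.
Proof.
move=> t_ge0 a_gt0 le_ab x_ge0.
rewrite hsum_split [1 + _]addrC addrK; apply: ler_sum => j _.
by rewrite ler_wpM2r ?exprn_ge0 // rprod_ratio_le.
Qed.

Lemma nneseries_le (m : nat) (f : nat -> R) (B : R) : (forall j, 0 <= f j) ->
  (forall n, \sum_(j < n) f (j + m)%N <= B) ->
  (\sum_(m <= j <oo) (f j)%:E <= B%:E)%E.
Proof.
move=> f_ge0 f_le; apply: lime_le.
  by apply: is_cvg_nneseries => n _ _; rewrite lee_fin.
apply: nearW => n; rewrite sumEFin lee_fin.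
have [le_nm|lt_mn] := leqP n m; last first.
  by rewrite -{1}[m]add0n big_addn big_mkord.
by rewrite big_geq // (le_trans _ (f_le 0%N)) // big_ord0.
Qed.

End HypergeometricPartialSums.

Section SeriesBounds.
Context {R : realType}.
Variable q : R.
Hypotheses (q_gt0 : 0 < q) (q_lt1 : q < 1).

Let q_ge0 : 0 <= q. Proof. exact: ltW. Qed.

(* Item (i): domination by hsum (r + 1) 1 q, then the binomial bound. *)
Lemma series_bound_i (r : R) k : 0 < r -> (1 <= k)%N ->
  (\sum_(1 <= j <oo) ((rprod (r + k%:R) j / rprod (k%:R : R) j * q ^+ j)%:E)
   <= ((1 - q) `^ (- (r + 1)) - 1)%:E)%E.
Proof.
move=> r_gt0 k_ge1; have k_gt0 : 0 < k%:R :> R by rewrite ltr0n.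
apply: nneseries_le => [j|n]; first by rewrite ratio_term_ge0 // ltr_wpDl ?ltW.
under eq_bigr do rewrite addn1.
apply: le_trans (hsum_tail_le _ 1 _ _ n (ltW r_gt0) ltr01 _ q_ge0) _.
  by rewrite ler1n.
by rewrite lerD2r hsum_le_powR // ltr_wpDr.
Qed.

(* Item (ii): domination by hsum (r + 1) 2 q, which the shifted binomial bound
   controls through 1 + r q hsum (r + 1) 2 q <= (1 - q)^(-r). *)
Lemma series_bound_ii (r : R) k : 1 <= r -> (1 <= k)%N ->
  (\sum_(1 <= j <oo) ((rprod (r + k%:R) j / rprod (k.+1%:R : R) j * q ^+ j)%:E)
   <= (((1 - q) `^ (- r) - 1) / (r * q) - 1)%:E)%E.
Proof.
move=> r_ge1 k_ge1; have r_gt0 : 0 < r by lra.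
apply: nneseries_le => [j|n]; first by rewrite ratio_term_ge0 // ltr_wpDr.
under eq_bigr do rewrite addn1.
have -> : r + k%:R = (r - 1) + k.+1%:R by rewrite -natr1; ring.
apply: le_trans (hsum_tail_le _ (1 + 1) _ _ n _ _ _ q_ge0) _; first by lra.
- by lra.
- by rewrite -natr1 lerD2r ler1n.
have -> : r - 1 + (1 + 1) = r + 1 by ring.
have := hsum2_le_powR _ _ n.+1 r_gt0 q_ge0 q_lt1.
set X := hsum _ _ _ _ => bound.
by rewrite lerD2r ler_pdivlMr ?mulr_gt0 //; lra.
Qed.

(* Item (iii): after factoring out q, domination by hsum (r + 2) 2 q, which the
   shifted binomial bound for r + 1 controls. *)
Lemma series_bound_iii (r : R) k : 0 < r -> (1 <= k)%N ->
  (\sum_(2 <= j <oo)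
     ((rprod (r + k.+1%:R) j.-1 / rprod (k.+1%:R : R) j.-1 * q ^+ j)%:E)
   <= (((1 - q) `^ (- (r + 1)) - 1) / r - q)%:E)%E.
Proof.
move=> r_gt0 k_ge1.
apply: nneseries_le => [j|n]; first by rewrite ratio_term_ge0 // ltr_wpDl ?ltW.
under eq_bigr do rewrite addn2 /= exprS mulrCA.
rewrite -mulr_sumr.
apply: le_trans (ler_wpM2l q_ge0 (hsum_tail_le _ (1 + 1) _ _ n _ _ _ q_ge0)) _.
- exact: ltW.
- by lra.
- by rewrite -natr1 lerD2r ler1n.
have r1_gt0 : 0 < r + 1 by lra.
have := hsum2_le_powR _ _ n.+1 r1_gt0 q_ge0 q_lt1; rewrite -addrA.
set X := hsum _ _ _ _ => bound.
have qX_ge0 : 0 <= q * X by rewrite mulr_ge0 // hsum_ge0 //; lra.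
have : q * X <= ((1 - q) `^ (- (r + 1)) - 1) / r by rewrite ler_pdivlMr //; lra.
by lra.
Qed.

(* Item (iv): domination by hsum (r + 3) 2 q, controlled by the shifted
   binomial bound for r + 2. *)
Lemma series_bound_iv (r : R) k : 0 < r -> (2 <= k)%N ->
  (\sum_(1 <= j <oo) ((rprod (r + k.+1%:R) j / rprod (k%:R : R) j * q ^+ j)%:E)
   <= (((1 - q) `^ (- (r + 2)) - 1) / ((r + 1) * q) - 1)%:E)%E.
Proof.
move=> r_gt0 k_ge2; have k_ge2R : 1 + 1 <= k%:R :> R by rewrite (_ : 1 + 1 = 2%:R) // ler_nat.
apply: nneseries_le => [j|n]; first by rewrite ratio_term_ge0 //; lra.
under eq_bigr do rewrite addn1.
have -> : r + k.+1%:R = (r + 1) + k%:R by rewrite -natr1; ring.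
apply: le_trans (hsum_tail_le _ (1 + 1) _ _ n _ _ k_ge2R q_ge0) _; [lra|lra|].
have -> : r + 1 + (1 + 1) = r + 2 + 1 by ring.
have r2_gt0 : 0 < r + 2 by lra.
have := hsum2_le_powR _ _ n.+1 r2_gt0 q_ge0 q_lt1.
set X := hsum _ _ _ _ => bound.
have qX_ge0 : 0 <= q * X by rewrite mulr_ge0 // hsum_ge0 //; lra.
by rewrite lerD2r ler_pdivlMr ?mulr_gt0 //; lra.
Qed.

(* Item (v): the extra factor k >= 2 of the denominator gives a factor 1/2,
   the rest is dominated by hsum (r + 2) 3 q; two shifts relate it to the
   binomial bound for r. *)
Lemma series_bound_v (r : R) k : 1 <= r -> (2 <= k)%N ->
  (\sum_(1 <= j <oo) ((rprod (r + k%:R) j / rprod (k%:R : R) j.+1 * q ^+ j)%:E)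
   <= (((1 - q) `^ (- r) - 1) / (r * (r + 1) * q ^+ 2) - 2^-1)%:E)%E.
Proof.
move=> r_ge1 k_ge2; have k_ge2R : 2 <= k%:R :> R by rewrite ler_nat.
have r_gt0 : 0 < r by lra.
apply: nneseries_le => [j|n]; first by rewrite ratio_term_ge0 //; lra.
have term_eq j : rprod (r + k%:R) j.+1 / rprod k%:R j.+2 * q ^+ j.+1
    = k%:R^-1 * (rprod (r + k%:R) j.+1 / rprod (k%:R + 1) j.+1 * q ^+ j.+1).
  by rewrite (rprodS k%:R j.+1) invfM; ring.
under eq_bigr do rewrite addn1 term_eq.
have -> : r + k%:R = (r - 1) + (k%:R + 1) by ring.
set X := hsum (r + 1 + 1) (1 + 1 + 1) q n.+1.
have tail_le : \sum_(j < n) (rprod (r - 1 + (k%:R + 1)) j.+1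
      / rprod (k%:R + 1) j.+1 * q ^+ j.+1) <= X - 1.
  rewrite /X (_ : r + 1 + 1 = (r - 1) + (1 + 1 + 1)); last by ring.
  by apply: hsum_tail_le => //; lra.
have half_ge0 : 0 <= 2^-1 :> R by rewrite invr_ge0.
apply: (@le_trans _ _ (2^-1 * (X - 1))).
  apply: le_trans _ (ler_wpM2l half_ge0 tail_le).
  rewrite mulr_sumr; apply: ler_sum => j _; rewrite ler_wpM2r //.
  - by rewrite ratio_term_ge0 //; lra.
  - by rewrite lef_pV2 ?posrE //; lra.
have := hsum2_le_powR _ _ n.+2 r_gt0 q_ge0 q_lt1; rewrite hsum_shift; last by lra.
rewrite -/X => bound.
have : 2^-1 * X <= ((1 - q) `^ (- r) - 1) / (r * (r + 1) * q ^+ 2).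
  rewrite ler_pdivlMr; last by rewrite !mulr_gt0 ?exprn_gt0 //; lra.
  have -> : 2^-1 * X * (r * (r + 1) * q ^+ 2)
    = r * q * ((r + 1) / (1 + 1) * q * X) by field.
  have : 0 <= r * q by rewrite mulr_ge0 //; lra.
  by nra.
by lra.
Qed.

End SeriesBounds.

Theorem lemmaA2 (R : realType) (r q p : R)
  (hr : 1 < r) (hq0 : 0 < q) (hq1 : q < 1) (hp : p = 1 - q) :
  (forall k : nat, (1 <= k)%N ->
     (\sum_(1 <= j <oo)
        ((rprod (r + k%:R) j / rprod (k%:R : R) j * q ^+ j)%:E))%E
     <= (p `^ (- (r + 1)) - 1)%:E)%E
  /\
  (forall k : nat, (1 <= k)%N ->
     (\sum_(1 <= j <oo)
        ((rprod (r + k%:R) j / rprod (k.+1%:R : R) j * q ^+ j)%:E))%E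
     <= ((p `^ (- r) - 1) / (r * q) - 1)%:E)%E
  /\
  (forall k : nat, (1 <= k)%N ->
     (\sum_(2 <= j <oo)
        ((rprod (r + k.+1%:R) j.-1 / rprod (k.+1%:R : R) j.-1 * q ^+ j)%:E))%E
     <= ((p `^ (- (r + 1)) - 1) / r - q)%:E)%E
  /\
  (forall k : nat, (2 <= k)%N ->
     (\sum_(1 <= j <oo)
        ((rprod (r + k.+1%:R) j / rprod (k%:R : R) j * q ^+ j)%:E))%E
     <= ((p `^ (- (r + 2)) - 1) / ((r + 1) * q) - 1)%:E)%E
  /\
  (forall k : nat, (2 <= k)%N ->
     (\sum_(1 <= j <oo)
        ((rprod (r + k%:R) j / rprod (k%:R : R) j.+1 * q ^+ j)%:E))%E
     <= ((p `^ (- r) - 1) / (r * (r + 1) * q ^+ 2) - 2^-1)%:E)%E.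
Proof.
subst p; have r_ge1 : 1 <= r := ltW hr.
have r_gt0 : 0 < r := lt_trans ltr01 hr.
split; [|split; [|split; [|split]]] => k k_ge.
- exact: series_bound_i.
- exact: series_bound_ii.
- exact: series_bound_iii.
- exact: series_bound_iv.
- exact: series_bound_v.
Qed.
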